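(* Let $\theta\ge1$, let $G = (\mu,\mathcal{V},\mathcal{W},\mathcal{E})$ be a non-trivial weighted bipartite graph and let $G'$ be a subgraph of $G$ such that $\mu^{(\theta)}(G')>\mu^{(\theta)}(G)$. Then \[ \delta(G')>\delta(G) \quad\text{and}\quad \frac{\mu^{(\theta')}(G')}{\mu^{(\theta')}(G)} \ge \frac{\mu^{(\theta)}(G')}{\mu^{(\theta)}(G)} >1 \quad\text{for all}\ \theta'\ge\theta. \]
   Context: A weighted bipartite graph is $G=(\mu,\mathcal{V},\mathcal{W},\mathcal{E})$ with $\mu:\mathbb{R}_{>0}\to\mathbb{R}_{>0}$, $\mathcal{V},\mathcal{W}$ finite sets of positive reals, $\mathcal{E}\subseteq\mathcal{V}\times\mathcal{W}$; it is non-trivial if $\mathcal{E}\neq\emptyset$. $\mu(\mathcal{T})=\sum_{t\in\mathcal{T}}\mu(t)$ and $\mu(\mathcal{E})=\sum_{(v,w)\in\mathcal{E}}\mu(v)\mu(w)$. Edge density $\delta(G)=\mu(\mathcal{E})/(\mu(\mathcal{V})\mu(\mathcal{W}))$ if $G$ is non-trivial, else $0$. For $\theta\ge1$, $\mu^{(\theta)}(G)=\delta(G)^\theta\mu(\mathcal{V})\mu(\mathcal{W})$. A subgraph of $G$ is $(\mu,\mathcal{V}',\mathcal{W}',\mathcal{E}')$ with $\mathcal{V}'\subseteq\mathcal{V}$, $\mathcal{W}'\subseteq\mathcal{W}$, $\mathcal{E}'\subseteq\mathcal{E}\cap(\mathcal{V}'\times\mathcal{W}')$. *)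

From HB Require Import structures.
From mathcomp Require Import all_boot all_order all_algebra.
From mathcomp Require Import finmap.
From mathcomp Require Import all_classical all_reals.
From mathcomp Require Import exp.
Set Implicit Arguments. Unset Strict Implicit. Unset Printing Implicit Defensive.
Import Order.TTheory GRing.Theory Num.Theory.
Local Open Scope ring_scope.
Local Open Scope fset_scope.

Record wbgraph (R : realType) := WBGraph {
  wmu : R -> R;
  wV : {fset R};
  wW : {fset R};
  wE : {fset (R * R)} }.

Definition wbg_wf (R : realType) (G : wbgraph R) : Prop :=
  (forall x : R, 0 < x -> 0 < wmu G x) /\
  (forall v, v \in wV G -> 0 < v) /\
  (forall w, w \in wW G -> 0 < w) /\
  (forall e, e \in wE G -> e.1 \in wV G /\ e.2 \in wW G).

Definition nontrivial (R : realType) (G : wbgraph R) : Prop := wE G != fset0.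

Definition mu_set (R : realType) (mu : R -> R) (T : {fset R}) : R :=
  \sum_(t <- T) mu t.

Definition mu_edges (R : realType) (mu : R -> R) (E : {fset (R * R)}) : R :=
  \sum_(e <- E) (mu e.1 * mu e.2).

Definition density (R : realType) (G : wbgraph R) : R :=
  if wE G != fset0 then
    mu_edges (wmu G) (wE G) / (mu_set (wmu G) (wV G) * mu_set (wmu G) (wW G))
  else 0.

Definition mu_theta (R : realType) (theta : R) (G : wbgraph R) : R :=
  powR (density G) theta * mu_set (wmu G) (wV G) * mu_set (wmu G) (wW G).

Definition subgraph (R : realType) (G' G : wbgraph R) : Prop :=
  wmu G' = wmu G /\
  wV G' `<=` wV G /\
  wW G' `<=` wW G /\
  (forall e, e \in wE G' -> [/\ e \in wE G, e.1 \in wV G' & e.2 \in wW G']).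

From HB Require Import structures.
From mathcomp Require Import all_boot all_order all_algebra.
From mathcomp Require Import finmap.
From mathcomp Require Import all_classical all_reals.
From mathcomp Require Import exp.
From mathcomp Require Import ring.
Set Implicit Arguments. Unset Strict Implicit. Unset Printing Implicit Defensive.
Import Order.TTheory GRing.Theory Num.Theory.
Local Open Scope ring_scope.

(* Write q = delta(G')/delta(G) and rho = mu(V')mu(W')/(mu(V)mu(W)), so that
   mu^(t)(G')/mu^(t)(G) = q^t rho for every t.  Since E' is contained in E,
   q rho = mu(E')/mu(E) <= 1.  If q <= 1 then q^theta <= q because theta >= 1,
   so the ratio at theta would be at most 1; hence q > 1, i.e. the density
   increases, and then q^t rho is nondecreasing in t. *)

Section FsetSums.
Variables (R : numDomainType) (I : choiceType).
Local Open Scope fset_scope.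

Lemma fsum_ge0 (T : {fset I}) (F : I -> R) :
  {in T, forall x, 0 <= F x} -> 0 <= \sum_(x <- T) F x.
Proof. by move=> F_ge0; rewrite big_seq; apply: sumr_ge0 => x /F_ge0. Qed.

Lemma fsum_gt0 (T : {fset I}) (F : I -> R) (x : I) :
  x \in T -> {in T, forall y, 0 < F y} -> 0 < \sum_(y <- T) F y.
Proof.
move=> xT F_gt0; rewrite (big_fsetD1 x) //=.
apply: ltr_pwDl; first exact: F_gt0.
by apply: fsum_ge0 => y /fsetD1P[_ /F_gt0/ltW].
Qed.

Lemma fsum_le_fsubset (A B : {fset I}) (F : I -> R) :
  A `<=` B -> {in B, forall x, 0 <= F x} ->
  \sum_(x <- A) F x <= \sum_(x <- B) F x.
Proof.
move=> AB F_ge0; rewrite [leRHS](big_fsetID _ (mem A)) /=.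
have -> : [fset x in B | x \in A] = A.
  apply/fsetP => x; rewrite !inE andbC.
  by case: (boolP (x \in A)) => // /(fsubsetP AB) ->.
by rewrite lerDl; apply: fsum_ge0 => x /imfsetP[y /andP[/F_ge0 ? _] ->].
Qed.

End FsetSums.

Section WeightedBipartiteGraph.
Variable R : realType.

Definition mu_prod (G : wbgraph R) : R :=
  mu_set (wmu G) (wV G) * mu_set (wmu G) (wW G).

Lemma mu_thetaE (t : R) (G : wbgraph R) :
  mu_theta t G = density G `^ t * mu_prod G.
Proof. by rewrite /mu_theta mulrA. Qed.

Lemma subgraph_wf (G' G : wbgraph R) :
  wbg_wf G -> subgraph G' G -> wbg_wf G'.
Proof.
move=> [mu_gt0 [V_gt0 [W_gt0 _]]] [mu_eq [/fsubsetP sV [/fsubsetP sW sE]]].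
rewrite /wbg_wf mu_eq; split=> //; split; first by move=> v /sV /V_gt0.
split; first by move=> w /sW /W_gt0.
by move=> e /sE[].
Qed.

Section WellFormed.
Variable G : wbgraph R.
Hypothesis wfG : wbg_wf G.

Lemma mu_set_V_ge0 : 0 <= mu_set (wmu G) (wV G).
Proof.
case: wfG => [mu_gt0 [V_gt0 _]].
by apply: fsum_ge0 => v /V_gt0/mu_gt0/ltW.
Qed.

Lemma mu_set_W_ge0 : 0 <= mu_set (wmu G) (wW G).
Proof.
case: wfG => [mu_gt0 [_ [W_gt0 _]]].
by apply: fsum_ge0 => w /W_gt0/mu_gt0/ltW.
Qed.

Lemma mu_prod_ge0 : 0 <= mu_prod G.
Proof. exact: mulr_ge0 mu_set_V_ge0 mu_set_W_ge0. Qed.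

Lemma mu_edge_gt0 (e : R * R) : e \in wE G -> 0 < wmu G e.1 * wmu G e.2.
Proof.
case: wfG => [mu_gt0 [V_gt0 [W_gt0 E_sub]]] /E_sub[/V_gt0 ? /W_gt0 ?].
by rewrite mulr_gt0 // mu_gt0.
Qed.

Lemma mu_prod_gt0 : nontrivial G -> 0 < mu_prod G.
Proof.
case: wfG => [mu_gt0 [V_gt0 [W_gt0 E_sub]]] /fset0Pn[e /E_sub[eV eW]].
by rewrite mulr_gt0 //; [apply: (fsum_gt0 eV) => v /V_gt0/mu_gt0 |
                         apply: (fsum_gt0 eW) => w /W_gt0/mu_gt0].
Qed.

Lemma mu_edges_density : mu_edges (wmu G) (wE G) = density G * mu_prod G.
Proof.
rewrite /density; case: ifP => [ntG | /negbFE/eqP->].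
  by rewrite divfK // gt_eqF // mu_prod_gt0.
by rewrite /mu_edges big_seq_fset0 mul0r.
Qed.

Lemma density_ge0 : 0 <= density G.
Proof.
rewrite /density; case: ifP => // _.
apply: divr_ge0; last exact: mu_prod_ge0.
by apply: fsum_ge0 => e /mu_edge_gt0/ltW.
Qed.

Lemma density_gt0 : nontrivial G -> 0 < density G.
Proof.
move=> ntG; rewrite /density ntG divr_gt0 ?mu_prod_gt0 //.
by have /fset0Pn[e eE] := ntG; apply: (fsum_gt0 eE) => f /mu_edge_gt0.
Qed.

Lemma mu_theta_gt0 (t : R) : nontrivial G -> 0 < mu_theta t G.
Proof.
by move=> ntG; rewrite mu_thetaE mulr_gt0 ?powR_gt0 ?density_gt0 ?mu_prod_gt0.
Qed.

End WellFormed.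

Lemma mu_edges_subgraph (G' G : wbgraph R) :
  wbg_wf G -> subgraph G' G ->
  mu_edges (wmu G') (wE G') <= mu_edges (wmu G) (wE G).
Proof.
move=> wfG [-> [_ [_ sE]]]; apply: fsum_le_fsubset.
  by apply/fsubsetP => e /sE[].
by move=> e /(mu_edge_gt0 wfG)/ltW.
Qed.

Lemma mu_theta_ratio (t : R) (G G' : wbgraph R) :
  0 < density G -> 0 <= density G' -> 0 < mu_prod G ->
  mu_theta t G' / mu_theta t G =
  (density G' / density G) `^ t * (mu_prod G' / mu_prod G).
Proof.
move=> d_gt0 d'_ge0 A_gt0; rewrite !mu_thetaE.
set d := density G; set d' := density G'.
have -> : d' `^ t = (d' / d) `^ t * d `^ t.
  by have d_ge0 := ltW d_gt0; rewrite -powRM ?divfK ?divr_ge0 ?gt_eqF.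
have := powR_gt0 t d_gt0; move: (d `^ t) => x x_gt0.
by field; rewrite !gt_eqF.
Qed.

End WeightedBipartiteGraph.

Lemma powR_scaled_gt1_base (R : realType) (q rho theta : R) :
  0 <= q -> 0 <= rho -> 1 <= theta ->
  q * rho <= 1 -> 1 < q `^ theta * rho -> 1 < q.
Proof.
move=> q_ge0 rho_ge0 theta_ge1 q_rho_le1 gain_gt1.
rewrite ltNge; apply/negP => q_le1.
suff : q `^ theta * rho <= 1 by rewrite leNgt gain_gt1.
apply: le_trans q_rho_le1; apply: ler_wpM2r => //.
have [->|q_neq0] := eqVneq q 0.
  by rewrite powR0 // gt_eqF // (lt_le_trans ltr01).
by apply: (ge1r_powR _ theta_ge1); rewrite lt_def q_neq0 q_ge0 q_le1.
Qed.

Theorem lemma5p6 (R : realType) (theta : R) (G G' : wbgraph R) :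
  1 <= theta ->
  wbg_wf G -> nontrivial G -> subgraph G' G ->
  mu_theta theta G' > mu_theta theta G ->
  density G' > density G /\
  (forall theta' : R, theta <= theta' ->
     mu_theta theta' G' / mu_theta theta' G >= mu_theta theta G' / mu_theta theta G /\
     mu_theta theta G' / mu_theta theta G > 1).
Proof.
move=> theta_ge1 wfG ntG subG gain.
have wfG' := subgraph_wf wfG subG.
have d_gt0 := density_gt0 wfG ntG.
have A_gt0 := mu_prod_gt0 wfG ntG.
have ratio t := mu_theta_ratio t d_gt0 (density_ge0 wfG') A_gt0.
set q := density G' / density G; set rho := mu_prod G' / mu_prod G.
have rho_ge0 : 0 <= rho by rewrite divr_ge0 ?mu_prod_ge0 ?ltW.
have q_rho_le1 : q * rho <= 1.
  rewrite mulf_div (ler_pdivrMr _ _ (mulr_gt0 d_gt0 A_gt0)) mul1r.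
  by rewrite -(mu_edges_density wfG) -(mu_edges_density wfG') mu_edges_subgraph.
have ratio_gt1 : 1 < q `^ theta * rho.
  by rewrite -ratio ltr_pdivlMr ?mul1r // mu_theta_gt0.
have q_gt1 := powR_scaled_gt1_base (divr_ge0 (density_ge0 wfG') (ltW d_gt0))
  rho_ge0 theta_ge1 q_rho_le1 ratio_gt1.
split; first by move: q_gt1; rewrite ltr_pdivlMr // mul1r.
move=> theta' theta_le; rewrite (ratio theta) (ratio theta'); split=> //.
exact: ler_wpM2r rho_ge0 _ _ (ler_powR (ltW q_gt1) theta_le).
Qed.
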